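(* Let $f:[0,1]^n\to[0,1]$ be continuous and polynomially bounded. Then there is an integer $t_0$ such that for every integer $t\ge t_0$, $$f(p)-\frac14\,\mathbb{P}_p\!\left[f(\bar X_t)\ge \tfrac12\right]\ \ge\ \frac18 f(p)\qquad\text{for all } p\in[0,1]^n.$$
   Context: For $p\in[0,1]^n$, let $X_1,X_2,\dots$ be i.i.d. random vectors in $\{0,1\}^n$ whose coordinates $X_{s,i}$ are independent Bernoulli($p_i$) variables, and let $\bar X_t=(X_1+\dots+X_t)/t\in[0,1]^n$; $\mathbb{P}_p$ denotes probability under this law. For a partition $[n]=A\sqcup S\sqcup B$, the open face is $F_{A,S,B}=\{p\in[0,1]^n: p_i=0\ (i\in A),\ 0<p_i<1\ (i\in S),\ p_i=1\ (i\in B)\}$. For $T\subseteq[n]$, $p^T=\prod_{i\in T}p_i$, $(1-p)^T=\prod_{i\in T}(1-p_i)$. A function $f:[0,1]^n\to[0,1]$ is polynomially bounded if there exist an integer $m\ge0$ and a real $c>0$ such that for every open face $F_{A,S,B}$ on which $f$ is not identically $0$, $f(p)\ge c\left((1-p)^A p^S(1-p)^S p^B\right)^m$ for all $p\in[0,1]^n$. *)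

From HB Require Import structures.
From mathcomp Require Import all_boot all_order all_algebra.
From mathcomp Require Import all_classical all_reals all_analysis.
Unset Printing Implicit Defensive.
Import Order.TTheory GRing.Theory Num.Theory numFieldNormedType.Exports.
Local Open Scope ring_scope.
Local Open Scope classical_set_scope.

Section Defs.
Variable R : realType.
Variable n : nat.

Definition cube : set 'rV[R]_n := [set p | forall i : 'I_n, 0 <= p ord0 i <= 1].

Definition face (A S B : {set 'I_n}) : set 'rV[R]_n :=
  [set p | (forall i, i \in A -> p ord0 i = 0) /\
           (forall i, i \in S -> 0 < p ord0 i < 1) /\
           (forall i, i \in B -> p ord0 i = 1)].

Definition is_partition3 (A S B : {set 'I_n}) : Prop :=
  [/\ (A :&: S = finset.set0)%SET, (A :&: B = finset.set0)%SET, (S :&: B = finset.set0)%SET & (A :|: S :|: B = [set: 'I_n])%SET].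

Definition face_monomial (A S B : {set 'I_n}) (p : 'rV[R]_n) : R :=
  (\prod_(i in A) (1 - p ord0 i)) * (\prod_(i in S) (p ord0 i * (1 - p ord0 i)))
  * (\prod_(i in B) p ord0 i).

Definition polynomially_bounded (f : 'rV[R]_n -> R) : Prop :=
  exists (m : nat) (c : R), 0 < c /\
    forall A S B : {set 'I_n}, is_partition3 A S B ->
      (exists q, face A S B q /\ f q != 0) ->
      forall p, cube p -> c * (face_monomial A S B p) ^+ m <= f p.

(* A sample (X_1,...,X_t) is a t x n boolean matrix x; x s i = X_{s+1,i}.
   Its probability under P_p (independent Bernoulli(p_i) coordinates). *)
Definition sample_weight (t : nat) (p : 'rV[R]_n) (x : 'M[bool]_(t, n)) : R :=
  \prod_(s < t) \prod_(i < n) (if x s i then p ord0 i else 1 - p ord0 i).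

Definition sample_mean (t : nat) (x : 'M[bool]_(t, n)) : 'rV[R]_n :=
  \row_i ((\sum_(s < t) ((x s i : nat)%:R : R)) / t%:R).

Definition Prob (t : nat) (p : 'rV[R]_n) (E : pred 'M[bool]_(t, n)) : R :=
  \sum_(x : 'M[bool]_(t, n) | E x) sample_weight t p x.

End Defs.

From HB Require Import structures.
From mathcomp Require Import all_boot all_order all_algebra.
From mathcomp Require Import ring lra zify.
From mathcomp Require Import all_classical all_reals all_analysis.
Import Order.TTheory GRing.Theory Num.Theory numFieldNormedType.Exports.
Local Open Scope ring_scope.
Local Open Scope classical_set_scope.

Set Implicit Arguments.
Unset Strict Implicit.

(* If f(p) >= 2/7 the inequality only needs P <= 1; otherwise the event f(X_t) >= 1/2 has
   probability at most f(p).  Let d be a modulus of uniform continuity of f for 1/8 and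
   1/L < d.  On the event, (a) some coordinate j of X_t is d-far from p_j, and (b) moving the
   coordinates of X_t that lie within 1/L of 0 or 1 onto 0 or 1 yields a point where f does
   not vanish, so on the face of that point f is polynomially bounded: f(p) >= c g(p)^m for
   its face monomial g.  The columns of the sample are independent, so the probability that
   every coordinate of X_t falls in the class prescribed by the face and that coordinate j is
   d-far factorises.  A counting bound makes each factor at most 4^(Lm) times the matching
   factor of g(p)^m, up to a slack 2^-e that Chebyshev's inequality (1/(t d^2) <= 2^-e)
   provides for coordinate j.  Summing over the 3^n n choices of face and of j gives at most
   3^n n 4^(Lmn) 2^-e f(p) / c <= f(p) once e is large. *)

Section Column.
Variables (R : realType) (t : nat).
Local Notation column := {ffun 'I_t -> bool}.

Definition bit_weight (p : R) (b : bool) : R := if b then p else 1 - p.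
Definition column_weight (p : R) (c : column) : R := \prod_(s < t) bit_weight p (c s).
Definition column_prob (p : R) (E : pred column) : R := \sum_(c | E c) column_weight p c.
Definition column_ones (c : column) : nat := #|[pred s | c s]|.
Definition column_mean (c : column) : R := (column_ones c)%:R / t%:R.

Lemma sum_column_prod (h : 'I_t -> bool -> R) :
  \sum_(c : column) \prod_s h s (c s) = \prod_s (h s true + h s false).
Proof.
rewrite (eq_bigr (fun s => \sum_(b : bool) h s b)) => [|s _]; last by rewrite big_bool.
by rewrite bigA_distr_bigA.
Qed.

Lemma sum_column_bits (c : column) : \sum_s ((c s : nat)%:R : R) = (column_ones c)%:R.
Proof.
rewrite -natr_sum /column_ones -sum1_card [in RHS]big_mkcond /=.
by congr (_%:R); apply: eq_bigr => s _; rewrite inE; case: (c s).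
Qed.

Lemma column_ones_le (c : column) : (column_ones c <= t)%N.
Proof. by rewrite /column_ones -[X in (_ <= X)%N]card_ord max_card. Qed.

Lemma column_weightE p (c : column) :
  column_weight p c = p ^+ column_ones c * (1 - p) ^+ (t - column_ones c).
Proof.
rewrite /column_weight (bigID (fun s => c s)) /=.
rewrite (eq_bigr (fun _ => p)) => [|s ->] //.
rewrite [X in _ * X](eq_bigr (fun _ => 1 - p)) => [|s /negbTE ->] //.
rewrite !prodr_const; congr (_ * _ ^+ _).
have := cardC [pred s | c s]; rewrite card_ord => card_t.
by rewrite -[X in (X - _)%N]card_t addKn.
Qed.

Lemma sum_column_weight (p : R) : \sum_c column_weight p c = 1.
Proof.
rewrite /column_weight (sum_column_prod (fun => bit_weight p)).
by apply: big1 => s _; rewrite /= addrC subrK.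
Qed.

Lemma column_variance (p : R) :
  \sum_(c : column) column_weight p c * ((column_ones c)%:R - t%:R * p) ^+ 2 =
  t%:R * (p * (1 - p)).
Proof.
pose a (b : bool) : R := (b : nat)%:R - p.
have centered c : (column_ones c)%:R - t%:R * p = \sum_s a (c s).
  by rewrite sumrB sum_column_bits sumr_const card_ord mulr_natl.
have covariance s s' : \sum_(c : column) column_weight p c * (a (c s) * a (c s')) =
    if s' == s then p * (1 - p) else 0.
  pose h u b := bit_weight p b * (if u == s then a b else 1) * (if u == s' then a b else 1).
  rewrite (eq_bigr (fun c : column => \prod_u h u (c u))); last first.
    by move=> c _; rewrite !big_split /= -!big_mkcond /= !big_pred1_eq mulrA.
  rewrite sum_column_prod (bigD1 s) //= /h eqxx.
  case: (eqVneq s' s) => [->|_].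
    by rewrite big1 => [|u /negbTE us]; rewrite /= ?us /bit_weight /a /=; ring.
  rewrite /bit_weight /a /= !mulr1.
  by set Z := \prod_(i < t | _) _; ring.
rewrite (eq_bigr (fun c => \sum_s \sum_s' column_weight p c * (a (c s) * a (c s')))).
  rewrite exchange_big /= (eq_bigr (fun => p * (1 - p))) ?sumr_const ?card_ord ?mulr_natl //.
  move=> s _; rewrite exchange_big /= (eq_bigr _ (fun s' _ => covariance s s')).
  by rewrite -big_mkcond big_pred1_eq.
move=> c _; rewrite centered expr2 mulr_suml mulr_sumr.
by apply: eq_bigr => s _; rewrite !mulr_sumr.
Qed.

Section Bernoulli.
Variable p : R.
Hypothesis p01 : 0 <= p <= 1.

Lemma bit_weight_ge0 b : 0 <= bit_weight p b.
Proof. by case/andP: p01 => ? ?; case: b => //=; rewrite subr_ge0. Qed.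

Lemma column_weight_ge0 c : 0 <= column_weight p c.
Proof. by apply: prodr_ge0 => s _; apply: bit_weight_ge0. Qed.

Lemma column_prob_ge0 (E : pred column) : 0 <= column_prob p E.
Proof. by apply: sumr_ge0 => c _; apply: column_weight_ge0. Qed.

Lemma le_column_prob (E E' : pred column) :
  (forall c, E c -> E' c) -> column_prob p E <= column_prob p E'.
Proof.
move=> EE'; rewrite /column_prob [leRHS]big_mkcond [leLHS]big_mkcond /=.
apply: ler_sum => c _; case: (boolP (E c)) => [/EE' -> //|_].
by case: (E' c) => //; apply: column_weight_ge0.
Qed.

Lemma column_prob_le1 (E : pred column) : column_prob p E <= 1.
Proof. by rewrite -(sum_column_weight p); apply: (@le_column_prob E predT). Qed.

Lemma column_prob_le_card (E : pred column) a :
  (forall c, E c -> column_weight p c <= a) -> 0 <= a -> column_prob p E <= 2 ^+ t * a.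
Proof.
move=> Ea a0; apply: (@le_trans _ _ (\sum_(c : column | E c) a)); first exact: ler_sum.
apply: (@le_trans _ _ (\sum_(c : column) a)).
  by rewrite big_mkcond; apply: ler_sum => c _; case: (E c).
by rewrite sumr_const card_ffun card_bool card_ord -natrX mulr_natl.
Qed.

Lemma column_weight_le (c : column) a b :
  (a <= column_ones c)%N -> (b <= t - column_ones c)%N ->
  column_weight p c <= p ^+ a * (1 - p) ^+ b.
Proof.
case/andP: p01 => p0 p1 ha hb; rewrite column_weightE.
by apply: ler_pM; rewrite ?exprn_ge0 ?subr_ge0 //; apply: ler_wiXn2l => //; lra.
Qed.

Lemma column_chebyshev d : 0 < d -> (0 < t)%N ->
  column_prob p (fun c => d <= `|column_mean c - p|) <= (t%:R * d ^+ 2)^-1.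
Proof.
move=> d0 t0; have tR : 0 < (t%:R : R) by rewrite ltr0n.
have td0 : 0 < t%:R ^+ 2 * d ^+ 2 by rewrite mulr_gt0 // exprn_gt0.
pose dev c := ((column_ones c)%:R - t%:R * p) ^+ 2 / (t%:R ^+ 2 * d ^+ 2).
have markov : column_prob p (fun c => d <= `|column_mean c - p|) <=
    \sum_(c : column) column_weight p c * dev c.
  rewrite /column_prob [leRHS](bigID (fun c => d <= `|column_mean c - p|)) /=.
  apply: ler_wpDr.
    by apply: sumr_ge0 => c _; rewrite mulr_ge0 ?column_weight_ge0 ?divr_ge0 ?sqr_ge0 ?ltW.
  apply: ler_sum => c far; rewrite -[leLHS]mulr1 ler_wpM2l ?column_weight_ge0 //.
  rewrite /dev ler_pdivlMr // mul1r.
  have -> : (column_ones c)%:R - t%:R * p = t%:R * (column_mean c - p).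
    by rewrite /column_mean mulrBr mulrCA mulfV ?mulr1 // gt_eqF.
  rewrite exprMn ler_pM2l ?exprn_gt0 // -(real_normK (num_real (column_mean c - p))).
  by rewrite !expr2 ler_pM // ltW.
apply: (le_trans markov); rewrite /dev.
under eq_bigr => c _ do rewrite mulrA.
rewrite -mulr_suml column_variance.
have pq1 : p * (1 - p) <= 1 by case/andP: p01 => ? ?; nra.
have -> : t%:R * (p * (1 - p)) / (t%:R ^+ 2 * d ^+ 2) = p * (1 - p) * (t%:R * d ^+ 2)^-1.
  by field; rewrite ?gt_eqF // ?mulr_gt0 ?exprn_gt0.
by rewrite -[leRHS]mul1r ler_pM2r // invr_gt0 mulr_gt0 // exprn_gt0.
Qed.

End Bernoulli.
End Column.

Section Sample.
Variables (R : realType) (n t : nat).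
Local Notation column := {ffun 'I_t -> bool}.
Local Notation sample := 'M[bool]_(t, n).

Definition sample_col (x : sample) (i : 'I_n) : column := [ffun s => x s i].

Lemma sum_sample_cols (H : {ffun 'I_n -> column} -> R) :
  \sum_(x : sample) H [ffun i => sample_col x i] = \sum_(F : {ffun 'I_n -> column}) H F.
Proof.
rewrite (reindex (fun F : {ffun 'I_n -> column} => \matrix_(s, i) F i s)) /=.
  apply: eq_bigr => F _; congr H; apply/ffunP => i; apply/ffunP => s.
  by rewrite !ffunE mxE.
exists (fun x => [ffun i => sample_col x i]) => [F _ | x _].
  by apply/ffunP => i; apply/ffunP => s; rewrite !ffunE mxE.
by apply/matrixP => s i; rewrite mxE !ffunE.
Qed.

Lemma sample_weightE (p : 'rV[R]_n) x :
  sample_weight R n t p x = \prod_i column_weight (p ord0 i) (sample_col x i).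
Proof.
rewrite /sample_weight exchange_big /=; apply: eq_bigr => i _.
by apply: eq_bigr => s _; rewrite ffunE.
Qed.

Lemma sample_meanE x i : sample_mean R n t x ord0 i = column_mean R (sample_col x i).
Proof.
rewrite /sample_mean /column_mean mxE -sum_column_bits; congr (_ / _).
by apply: eq_bigr => s _; rewrite ffunE.
Qed.

Lemma sample_mean_cube x : (0 < t)%N -> cube R n (sample_mean R n t x).
Proof.
move=> t_gt0 i; rewrite sample_meanE /column_mean divr_ge0 ?ler0n //=.
by rewrite ler_pdivrMr ?ltr0n // mul1r ler_nat column_ones_le.
Qed.

Lemma Prob_cols_prod (p : 'rV[R]_n) (E : 'I_n -> pred column) :
  Prob R n t p (fun x => [forall i, E i (sample_col x i)]) =
  \prod_i column_prob (p ord0 i) (E i).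
Proof.
rewrite /Prob /column_prob.
under eq_bigr => i _ do rewrite big_mkcond.
rewrite bigA_distr_bigA /= -(sum_sample_cols (fun F =>
  \prod_i (if E i (F i) then column_weight (p ord0 i) (F i) else 0))).
rewrite big_mkcond /=; apply: eq_bigr => x _.
case: (boolP [forall i, _]) => [/forallP Ex | /forallPn [j /negbTE Exj]].
  by rewrite sample_weightE; apply: eq_bigr => i _; rewrite ffunE Ex.
by rewrite (bigD1 j) //= ffunE Exj mul0r.
Qed.

Section Cube.
Variable p : 'rV[R]_n.
Hypothesis p_cube : cube R n p.

Lemma sample_weight_ge0 x : 0 <= sample_weight R n t p x.
Proof. by rewrite sample_weightE; apply: prodr_ge0 => i _; apply: column_weight_ge0. Qed.

Lemma Prob_le1 (E : pred sample) : Prob R n t p E <= 1.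
Proof.
have total : \sum_(x : sample) sample_weight R n t p x = 1.
  have := Prob_cols_prod p (fun => predT); rewrite big1 => [|i _]; last first.
    exact: sum_column_weight.
  by rewrite /Prob => <-; apply: eq_bigl => x; apply/esym/forallP.
rewrite /Prob -total [leRHS](bigID E) /= lerDl.
by apply: sumr_ge0 => x _; apply: sample_weight_ge0.
Qed.

Lemma Prob_union_bound (I : finType) (P : pred I) (E : pred sample) (F : I -> pred sample) :
  (forall x, E x -> exists2 k, P k & F k x) ->
  Prob R n t p E <= \sum_(k | P k) Prob R n t p (F k).
Proof.
move=> cover; rewrite /Prob [leRHS](eq_bigr _ (fun k _ => big_mkcond _ _)).
rewrite [leRHS]exchange_big [leLHS]big_mkcond /=.
apply: ler_sum => x _; case: ifP => [/cover [k Pk Fkx] | _]; last first.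
  by apply: sumr_ge0 => k _; case: ifP => // _; apply: sample_weight_ge0.
rewrite (bigD1 k) //= Fkx ler_wpDr // sumr_ge0 // => k' _.
by case: ifP => // _; apply: sample_weight_ge0.
Qed.

End Cube.
End Sample.

(* A face type [tau : {ffun 'I_n -> option bool}] encodes the face F_{A,S,B} whose sets
   A, S, B are the coordinates labelled [Some false], [None] and [Some true]. *)
Definition face_class {R : realType} (eta v : R) : option bool :=
  if v < eta then Some false else if v <= 1 - eta then None else Some true.

Definition face_factor {R : realType} (o : option bool) (p : R) : R :=
  match o with Some false => 1 - p | None => p * (1 - p) | Some true => p end.

Lemma face_factor01 {R : realType} o (p : R) : 0 <= p <= 1 -> 0 <= face_factor o p <= 1.
Proof. by case/andP => p0 p1; case: o => [[]|] /=; apply/andP; split; nra. Qed.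

Section FaceClassBound.
Variables (R : realType) (t L : nat).
Hypotheses (L_gt1 : (1 < L)%N) (t_gt0 : (0 < t)%N).
Local Notation column := {ffun 'I_t -> bool}.
Local Notation N := (t %/ L)%N.

(* A column of class [o] has at least [N] ones, at least [N] zeros, or both. *)
Lemma column_weight_face_class (p : R) (c : column) o : 0 <= p <= 1 ->
  face_class L%:R^-1 (column_mean R c) = o -> column_weight p c <= face_factor o p ^+ N.
Proof.
move=> p01 class_c; have k_le := column_ones_le c.
have NL : (N * L <= t)%N := leq_divM t L.
have L_gt0 : (0 < L)%N := ltnW L_gt1.
have NL' : (t < N.+1 * L)%N := ltn_ceil t L_gt0.
have tL0 : 0 < (t%:R : R) * L%:R by rewrite mulr_gt0 ?ltr0n.
set k := column_ones c in k_le; set x := column_mean R c in class_c.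
have kL : (k * L)%:R = x * (t%:R * L%:R) :> R.
  by rewrite /x /column_mean natrM mulrA divfK // gt_eqF // ltr0n.
have tLeta : t%:R = L%:R^-1 * (t%:R * L%:R) :> R.
  by rewrite mulrCA mulVf ?mulr1 // gt_eqF // ltr0n.
move: class_c; rewrite /face_class.
case: ltrP => [lo <- /= | lo].
  suff: (N <= t - k)%N by move/(column_weight_le p01 (leq0n k)); rewrite expr0 mul1r.
  have : (k * L < t)%N by rewrite -(ltr_nat R) kL [X in _ < X]tLeta ltr_pM2r.
  nia.
case: ifP => hi <- /=.
  suff [N_k N_tk] : (N <= k)%N /\ (N <= t - k)%N.
    by rewrite exprMn; apply: column_weight_le.
  have : (t <= k * L)%N by rewrite -(ler_nat R) kL [X in X <= _]tLeta ler_pM2r.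
  have : (k * L + t <= t * L)%N.
    rewrite -(ler_nat R) natrD kL [X in _ + X]tLeta natrM -mulrDl -[X in _ <= X]mul1r.
    by rewrite ler_pM2r // -lerBrDr.
  nia.
suff: (N <= k)%N by move/(column_weight_le p01)/(_ (leq0n _)); rewrite expr0 mulr1.
have : (t * L < k * L + t)%N.
  rewrite -(ltr_nat R) natrD kL [X in _ + X]tLeta natrM -mulrDl -[X in X < _]mul1r.
  by rewrite ltr_pM2r //; move/negbT: hi; rewrite -ltNge; lra.
nia.
Qed.

End FaceClassBound.

Section FaceClassProb.
Variables (R : realType) (t L m e : nat).
Hypotheses (L_gt1 : (1 < L)%N) (t_large : (2 * (L * m) + 2 * L + e <= t)%N).
Local Notation column := {ffun 'I_t -> bool}.
Local Notation N := (t %/ L)%N.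

Lemma m_le_div : (m <= N)%N.
Proof. by have := ltn_ceil t (ltnW L_gt1); nia. Qed.

Lemma exp2_le_exp4_div : (2 ^+ (t + e) <= (4 ^+ L) ^+ (N - m) :> R).
Proof.
rewrite -exprM -[4](_ : 2 ^+ 2 = 4 :> R); last by rewrite -natrX.
rewrite -exprM ler_eXn2l ?ltr1n //.
by have := ltn_ceil t (ltnW L_gt1); have := m_le_div; nia.
Qed.

(* Either the factor [g] is at least [4^-L], and [(4^L g)^m >= 1] absorbs the
   factor [g^m]; or it is smaller, and the [N - m] spare factors [g] of the
   counting bound [2^t g^N] pay for [2^(t + e)]. *)
Lemma column_prob_face_class_le (p : R) o (E : pred column) a :
  0 <= p <= 1 -> (forall c, E c -> face_class L%:R^-1 (column_mean R c) = o) ->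
  (2 ^+ e)^-1 <= a -> column_prob p E <= a ->
  column_prob p E <= a * (4 ^+ L) ^+ m * face_factor o p ^+ m.
Proof.
move=> p01 Eo ea Ea.
have /andP[g0 g1] := face_factor01 o p01; set g := face_factor o p in g0 g1 *.
have a0 : 0 <= a := le_trans (column_prob_ge0 p01 E) Ea.
have Q0 : 0 < 4 ^+ L :> R by rewrite exprn_gt0.
have [g_big | g_small] := leP (4 ^+ L)^-1 g.
  apply: (le_trans Ea); rewrite -mulrA ler_peMr // -exprMn exprn_ege1 //.
  by rewrite -ler_pdivrMl // mulr1.
have t_gt0 : (0 < t)%N by lia.
have counting : column_prob p E <= 2 ^+ t * g ^+ N.
  apply: column_prob_le_card; last by rewrite exprn_ge0.
  by move=> c /Eo; apply: column_weight_face_class.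
have decay : g ^+ (N - m) * 2 ^+ (t + e) <= 1.
  apply: le_trans (ler_wpM2l (exprn_ge0 _ g0) exp2_le_exp4_div) _.
  rewrite -exprMn exprn_ile1 ?mulr_ge0 ?(ltW Q0) //.
  by rewrite -ler_pdivlMr // div1r ltW.
rewrite exprD in decay.
apply: (le_trans counting); rewrite -(subnKC m_le_div) exprD.
have E0 : 0 < 2 ^+ e :> R by rewrite exprn_gt0.
have K1 : 1 <= (4 ^+ L) ^+ m :> R by rewrite !exprn_ege1 // ler1n.
have {}ea : 1 <= 2 ^+ e * a by rewrite -ler_pdivrMl // mulr1.
set G := g ^+ (N - m) in decay *.
have TG : 2 ^+ t * G <= a.
  rewrite -(ler_pM2r E0) [leRHS]mulrC (le_trans _ ea) // (le_trans _ decay) //.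
  by rewrite mulrA [G * _]mulrC lexx.
rewrite mulrCA mulrC ler_wpM2r ?exprn_ge0 //.
by rewrite (le_trans TG) // ler_peMr.
Qed.

End FaceClassProb.

Lemma compact_unif_continuous (R : realType) (X : pseudoMetricType R) (A : set X)
    (f : X -> R) :
  compact A -> {within A, continuous f} ->
  forall eps, 0 < eps -> exists2 d, 0 < d &
    forall x y, A x -> A y -> ball x d y -> `|f x - f y| < eps.
Proof.
move=> A_compact f_cont eps eps0.
pose P (d : R) (x' : X) := A x' -> forall y, A y -> ball x' d y -> `|f x' - f y| < eps.
suff near_d : \forall d \near (0:R)^'+, A `<=` P d.
  near (0:R)^'+ => d; exists d; first by near: d; exact: nbhs_right_gt.
  have d_covers := near near_d d.
  by move=> x y Ax Ay; apply: d_covers.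
apply: (proj1 (compact_near_coveringP A) A_compact R (0:R)^'+ P) => x Ax.
have /cvgrPdist_lt /(_ (eps / 2)) := proj1 (subspace_continuousP _ _) f_cont x Ax.
case/(_ _)/nbhs_ballP => [|r /= r0 near_x]; first lra.
exists (ball x (r / 2), [set d : R | 0 < d < r / 2]).
  split; first by apply: nbhsx_ballx; lra.
  near=> d; apply/andP; split; first by near: d; exact: nbhs_right_gt.
  by near: d; apply: nbhs_right_lt; lra.
move=> [x' d] /= [xx' /andP[d0 dr]] Ax' y Ay x'y.
have /near_x /(_ Ax') fx' : ball x r x' by apply: le_ball xx'; lra.
have /near_x /(_ Ay) fy : ball x r y by apply: le_ball (ball_triangle xx' x'y); lra.
rewrite (_ : f x' - f y = (f x' - f x) + (f x - f y)); last by ring.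
by apply: le_lt_trans (ler_normD _ _) _; rewrite distrC in fx'; lra.
Unshelve. all: end_near.
Qed.

Lemma cube_compact (R : realType) n : compact (cube R n).
Proof.
have -> : cube R n = [set v : 'rV[R]_n | forall i, `[(0:R), 1]%classic (v ord0 i)].
  by rewrite predeqE => v /=; split => v01 i; have := v01 i; rewrite /= in_itv.
by apply: (@rV_compact _ n (fun => `[(0:R), 1]%classic)) => i; apply: segment_compact.
Qed.

Lemma cube_unif_continuous (R : realType) n (f : 'rV[R]_n -> R) :
  {within cube R n, continuous f} ->
  forall eps, 0 < eps -> exists2 d, 0 < d &
    forall x y, cube R n x -> cube R n y ->
      (forall i, `|x ord0 i - y ord0 i| < d) -> `|f x - f y| < eps.
Proof.
move=> f_cont eps eps0.
have [d d0 unif] := compact_unif_continuous (@cube_compact R n) f_cont eps0.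
exists d => // x y cx cy xy; apply: unif => //.
by split => // i j; rewrite (ord1 i); apply: xy.
Qed.

Section FaceTypes.
Variables (R : realType) (n : nat).
Local Notation face_type := {ffun 'I_n -> option bool}.

Definition face_zeros (tau : face_type) : {set 'I_n} := [set i | tau i == Some false].
Definition face_interior (tau : face_type) : {set 'I_n} := [set i | tau i == None].
Definition face_ones (tau : face_type) : {set 'I_n} := [set i | tau i == Some true].

Lemma face_type_partition tau :
  is_partition3 n (face_zeros tau) (face_interior tau) (face_ones tau).
Proof. by split; apply/setP => i; rewrite !inE; case: (tau i) => [[]|]. Qed.

Lemma face_monomial_prod tau (p : 'rV[R]_n) :
  face_monomial R n (face_zeros tau) (face_interior tau) (face_ones tau) p =
  \prod_i face_factor (tau i) (p ord0 i).
Proof.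
rewrite /face_monomial !(big_mkcond (fun i => i \in _)) -!big_split /=.
by apply: eq_bigr => i _; rewrite !inE; case: (tau i) => [[]|] /=; rewrite ?mulr1 ?mul1r.
Qed.

Definition round_to_face (eta v : R) : R :=
  match face_class eta v with Some false => 0 | None => v | Some true => 1 end.

Lemma round_to_faceP (eta d v : R) : 0 < eta -> eta < d -> 0 <= v <= 1 ->
  [/\ 0 <= round_to_face eta v <= 1, `|v - round_to_face eta v| < d &
      face_class eta v = None -> 0 < v < 1].
Proof.
move=> eta0 eta_d /andP[v0 v1]; rewrite /round_to_face /face_class.
case: ltrP => lo; first by rewrite ler01 lexx subr0 ger0_norm //; split => //; lra.
case: ifP => hi; first by rewrite subrr normr0; split => //; lra.
move/negbT: hi; rewrite -ltNge => hi.
by rewrite ler01 lexx distrC ger0_norm ?subr_ge0 //; split => //; lra.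
Qed.

Lemma round_to_face_cube (eta d : R) (q : 'rV[R]_n) : 0 < eta -> eta < d -> cube R n q ->
  [/\ cube R n (\row_i round_to_face eta (q ord0 i)),
      (forall i, `|q ord0 i - round_to_face eta (q ord0 i)| < d) &
      let tau := [ffun i => face_class eta (q ord0 i)] in
      face R n (face_zeros tau) (face_interior tau) (face_ones tau)
        (\row_i round_to_face eta (q ord0 i))].
Proof.
move=> eta0 eta_d q_cube; have roundP i := round_to_faceP eta0 eta_d (q_cube i).
split=> [i | i | tau]; first by rewrite mxE; case: (roundP i).
  by case: (roundP i).
by split; [|split] => i; rewrite !inE ffunE mxE => /eqP class_i;
  rewrite /round_to_face class_i //; case: (roundP i) => _ _; apply.
Qed.

End FaceTypes.

Section FarSamples.
Variables (R : realType) (n : nat) (f : 'rV[R]_n -> R) (m : nat) (c d : R).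
Variables (L e t : nat) (p : 'rV[R]_n).
Local Notation face_type := {ffun 'I_n -> option bool}.
Local Notation column := {ffun 'I_t -> bool}.
Local Notation sample := 'M[bool]_(t, n).
Local Notation eta := (L%:R^-1 : R).
Local Notation K := ((4 ^+ L) ^+ m : R).

Hypotheses (c_gt0 : 0 < c) (d_gt0 : 0 < d).
Hypothesis f_bound : forall A S B : {set 'I_n}, is_partition3 n A S B ->
  (exists q, face R n A S B q /\ f q != 0) ->
  forall q, cube R n q -> c * (face_monomial R n A S B q) ^+ m <= f q.
Hypothesis f_unif : forall x y, cube R n x -> cube R n y ->
  (forall i, `|x ord0 i - y ord0 i| < d) -> `|f x - f y| < 8^-1.
Hypotheses (L_gt1 : (1 < L)%N) (eta_lt_d : eta < d).
Hypothesis e_large : (3 ^ n * n)%:R * K ^+ n / c < 2 ^+ e.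
Hypotheses (t_large : (2 * (L * m) + 2 * L + e <= t)%N) (t_cheb : 2 ^+ e <= t%:R * d ^+ 2).
Hypotheses (p_cube : cube R n p) (fp_ge0 : 0 <= f p) (fp_small : f p < 2 / 7).

Definition nonvanishing_face (tau : face_type) : Prop :=
  exists q, face R n (face_zeros tau) (face_interior tau) (face_ones tau) q /\ f q != 0.

Definition far_face_event (tau : face_type) (j : 'I_n) (i : 'I_n) : pred column :=
  fun cl => (face_class eta (column_mean R cl) == tau i) &&
            ((i != j) || (d <= `|column_mean R cl - p ord0 i|)).

Lemma far_sample_cover (x : sample) : 2^-1 <= f (sample_mean R n t x) ->
  exists2 k : face_type * 'I_n, `[< nonvanishing_face k.1 >] &
    [forall i, far_face_event k.1 k.2 i (sample_col x i)].
Proof.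
set q := sample_mean R n t x => fq_big.
have q_cube : cube R n q by apply: sample_mean_cube; lia.
have [j far_j] : exists j, d <= `|q ord0 j - p ord0 j|.
  apply/existsP; apply: contraTT fq_big; rewrite negb_exists => /forallP near_p.
  have near_fp : `|f q - f p| < 8^-1 by apply: f_unif => // i; rewrite ltNge near_p.
  by rewrite -ltNge; have := ler_norm (f q - f p); have := fp_small; lra.
have eta_gt0 : 0 < eta by rewrite invr_gt0 ltr0n ltnW.
have [r_cube q_r r_face] := round_to_face_cube eta_gt0 eta_lt_d q_cube.
exists ([ffun i => face_class eta (q ord0 i)], j) => /=.
  apply/asboolP; exists (\row_i round_to_face eta (q ord0 i)); split => //.
  apply/eqP => fr0.
  have : `|f q - f (\row_i round_to_face eta (q ord0 i))| < 8^-1.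
    by apply: f_unif => // i; rewrite mxE; apply: q_r.
  by rewrite fr0 subr0; have := ler_norm (f q); lra.
apply/forallP => i; rewrite /far_face_event -sample_meanE -/q ffunE eqxx /=.
by case: (eqVneq i j) => [->|].
Qed.

Lemma far_face_event_prob tau j : nonvanishing_face tau ->
  Prob R n t p (fun x => [forall i, far_face_event tau j i (sample_col x i)]) <=
  (2 ^+ e)^-1 * K ^+ n * (f p / c).
Proof.
move=> nonvanishing_tau; rewrite Prob_cols_prod.
have p01 i : 0 <= p ord0 i <= 1 := p_cube i.
have t_gt0 : (0 < t)%N by lia.
have E0 : 0 < 2 ^+ e :> R by rewrite exprn_gt0.
have coord i : column_prob (p ord0 i) (far_face_event tau j i) <=
    (if i == j then (2 ^+ e)^-1 else 1) * K * face_factor (tau i) (p ord0 i) ^+ m.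
  apply: (column_prob_face_class_le L_gt1 t_large (p01 i)).
  - by move=> cl /andP[/eqP].
  - by case: eqP => _; rewrite ?lexx // invf_le1 // exprn_ege1 // ler1n.
  case: eqP => [->|_]; last exact: column_prob_le1.
  apply: (@le_trans _ _ (column_prob (p ord0 j) (fun cl => d <= `|column_mean R cl - p ord0 j|))).
    by apply: le_column_prob (p01 j) _ _ _ => cl /andP[_]; rewrite eqxx.
  apply: le_trans (column_chebyshev (p01 j) d_gt0 t_gt0) _.
  by rewrite lef_pV2 ?posrE // mulr_gt0 ?ltr0n // exprn_gt0.
apply: (@le_trans _ _ (\prod_i ((if i == j then (2 ^+ e)^-1 else 1) * K *
    face_factor (tau i) (p ord0 i) ^+ m))).
  by apply: ler_prod => i _; rewrite column_prob_ge0 ?coord.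
rewrite !big_split /= -big_mkcond big_pred1_eq prodr_const card_ord prodrXl.
rewrite -face_monomial_prod ler_wpM2l ?mulr_ge0 ?invr_ge0 ?exprn_ge0 ?ler0n //.
rewrite ler_pdivlMr // mulrC.
exact: f_bound (face_type_partition tau) nonvanishing_tau p p_cube.
Qed.

Lemma far_prob_le : Prob R n t p (fun x => 2^-1 <= f (sample_mean R n t x)) <= f p.
Proof.
pose B := (2 ^+ e)^-1 * K ^+ n * (f p / c).
have B0 : 0 <= B by rewrite /B !mulr_ge0 ?invr_ge0 ?exprn_ge0 ?ler0n ?(ltW c_gt0).
pose F k x := [forall i, far_face_event k.1 k.2 i (sample_col x i)].
apply: le_trans (Prob_union_bound (F := F) p_cube far_sample_cover) _.
apply: le_trans (ler_sum _ (fun k fk => far_face_event_prob k.2 (asboolW fk))) _.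
apply: (@le_trans _ _ (\sum_(k : face_type * 'I_n) B)).
  by rewrite [leRHS](bigID (fun k => `[< nonvanishing_face k.1 >])) /= lerDl sumr_ge0.
rewrite sumr_const card_prod card_ffun card_option card_bool !card_ord -mulr_natl /B.
rewrite [X in X <= _](_ : _ = (3 ^ n * n)%:R * K ^+ n / c / 2 ^+ e * f p); last by ring.
by rewrite ler_piMl // ler_pdivrMr ?exprn_gt0 // mul1r ltW.
Qed.

End FarSamples.

Lemma exists_inv_nat_lt (R : realType) (d : R) : 0 < d ->
  exists2 L : nat, (1 < L)%N & L%:R^-1 < d.
Proof.
move=> d_gt0; exists (Num.trunc d^-1).+2 => //.
rewrite -[X in _ < X]invrK ltf_pV2 ?posrE ?invr_gt0 ?ltr0n //.
by apply: lt_le_trans (truncnS_gt _) _; rewrite ler_nat.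
Qed.

Lemma exists_exp2_gt (R : realType) (x : R) : exists e : nat, x < 2 ^+ e.
Proof.
exists (Num.trunc x).+1; apply: lt_trans (truncnS_gt x) _.
by rewrite -natrX ltr_nat ltn_expl.
Qed.

Lemma exists_nat_mul_ge (R : realType) (x y : R) : 0 < y ->
  exists k : nat, forall t, (k <= t)%N -> x <= t%:R * y.
Proof.
move=> y_gt0; exists (Num.trunc (x / y)).+1 => t k_le_t.
rewrite -ler_pdivrMr //; apply/ltW/(lt_le_trans (truncnS_gt _)).
by rewrite ler_nat.
Qed.

Theorem lemma5 (R : realType) (n : nat) (f : 'rV[R]_n -> R) :
  {within cube R n, continuous f} ->
  (forall p, cube R n p -> 0 <= f p <= 1) ->
  polynomially_bounded R n f ->
  exists t0 : nat, forall t : nat, (t0 <= t)%N ->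
    forall p, cube R n p ->
      f p - 4^-1 * Prob R n t p (fun x => 2^-1 <= f (sample_mean R n t x)) >= 8^-1 * f p.
Proof.
move=> f_cont f01 [m [c [c_gt0 f_bound]]].
have eighth_gt0 : 0 < 8^-1 :> R by rewrite invr_gt0.
have [d d_gt0 f_unif] := cube_unif_continuous f_cont eighth_gt0.
have [L L_gt1 eta_lt_d] := exists_inv_nat_lt d_gt0.
have [e e_large] := exists_exp2_gt ((3 ^ n * n)%:R * ((4 ^+ L) ^+ m) ^+ n / c).
have [tc t_cheb] := exists_nat_mul_ge (2 ^+ e) (exprn_gt0 2 d_gt0).
exists (2 * (L * m) + 2 * L + e + tc)%N => t t_ge p p_cube.
have P_le1 := Prob_le1 p_cube (fun x : 'M[bool]_(t, n) => 2^-1 <= f (sample_mean R n t x)).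
have /andP[fp_ge0 _] := f01 p p_cube.
case: (leP (2 / 7) (f p)) => [fp_big | fp_small]; first lra.
have t_large : (2 * (L * m) + 2 * L + e <= t)%N by lia.
have := far_prob_le c_gt0 d_gt0 f_bound f_unif L_gt1 eta_lt_d e_large
  t_large (t_cheb t (leq_trans (leq_addl _ _) t_ge)) p_cube fp_ge0 fp_small.
lra.
Qed.
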